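(* Let $f=\min\{0,X,Y,X+Y\}$. Then for all $N\ge2$, $$N+1\le\dim(W_N)\le 4N,$$ where $W_N$ is the set associated with $\mathrm{rad}(f)$ as in the context.
   Context: A tropical (Laurent) polynomial in $2$ variables is $g=\min_{1\le j\le l}\{h_j+b_{j,1}X+b_{j,2}Y\}$ with $h_j\in\mathbb{R}$ and pairwise distinct $(b_{j,1},b_{j,2})\in\mathbb{Z}^2$. A point $x\in\mathbb{R}^2$ is a tropical solution of $g$ if the minimum is attained at least twice. $V(f)$ is the set of tropical solutions of $f$ and $\mathrm{rad}(f)$ is the set of all tropical polynomials vanishing at every point of $V(f)$. Let $T_N=\{0,\dots,N-1\}^2$ and identify $\mathbb{R}^{T_N}\cong\mathbb{R}^{N^2}$ with coordinates $w(k)$, $k\in T_N$. For $g$ with all exponents in $T_N$, its linearization is $\min_j\{h_j+w(b_{j,1},b_{j,2})\}$, satisfied by $w$ if the minimum is attained at least twice. $W_N$ is the set of all $w\in\mathbb{R}^{N^2}$ satisfying the linearizations of all $g\in\mathrm{rad}(f)$ with exponents in $T_N$. $\dim(W_N)$ is the minimum of the dimensions of tropical linear prevarieties (finite unions of convex polyhedra in $\mathbb{R}^{N^2}$) containing $W_N$. *)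

From HB Require Import structures.
From mathcomp Require Import all_boot all_order all_algebra.
From mathcomp Require Import reals.
Set Implicit Arguments. Unset Strict Implicit. Unset Printing Implicit Defensive.
Import Order.TTheory GRing.Theory Num.Theory.
Local Open Scope ring_scope.

Section Tropical.
Variable R : realType.

Definition min_twice (vs : seq R) : Prop :=
  exists i j : nat,
    [/\ (i < size vs)%N, (j < size vs)%N, i <> j,
        nth 0 vs i = nth 0 vs j &
        forall k, (k < size vs)%N -> nth 0 vs i <= nth 0 vs k].

(* A tropical Laurent polynomial in 2 variables:
   g = min_j { h_j + b_{j,1} X + b_{j,2} Y }, stored as the list of (h_j, (b_{j,1}, b_{j,2})). *)
Definition tpoly := seq (R * (int * int)).

Definition tpoly_wf (g : tpoly) : bool := (0 < size g)%N && uniq (map snd g).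

Definition tterm (t : R * (int * int)) (x : R * R) : R :=
  t.1 + (t.2.1)%:~R * x.1 + (t.2.2)%:~R * x.2.

Definition tsol (g : tpoly) (x : R * R) : Prop := min_twice (map (tterm ^~ x) g).

Definition tvar (f : tpoly) : R * R -> Prop := tsol f.

Definition in_rad (f g : tpoly) : Prop := tpoly_wf g /\ forall x, tvar f x -> tsol g x.

Definition pt (N : nat) := 'I_N * 'I_N -> R.

(* A "linear" polynomial on R^{T_N}: min_j { h_j + w(k_j) } with k_j in T_N. *)
Definition lpoly (N : nat) := seq (R * ('I_N * 'I_N)).
Definition lpoly_wf N (g : lpoly N) : bool := (0 < size g)%N && uniq (map snd g).
Definition lsol N (g : lpoly N) (w : pt N) : Prop :=
  min_twice (map (fun t => t.1 + w t.2) g).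

(* A tropical polynomial with all exponents in T_N, seen as an element of tpoly;
   its linearization is exactly the lpoly g itself. *)
Definition embedT N (g : lpoly N) : tpoly :=
  map (fun t => (t.1, ((nat_of_ord t.2.1)%:Z, (nat_of_ord t.2.2)%:Z))) g.

Definition WN (f : tpoly) (N : nat) : pt N -> Prop :=
  fun w => forall g : lpoly N, in_rad f (embedT g) -> lsol g w.

Definition is_prevariety N (P : pt N -> Prop) : Prop :=
  exists s : seq (lpoly N),
    (forall g, g \in s -> lpoly_wf g) /\
    (forall w, P w <-> forall g, g \in s -> lsol g w).

Definition is_polyhedron N (Q : pt N -> Prop) : Prop :=
  exists (m : nat) (a : 'I_m -> pt N) (b : 'I_m -> R),
    forall w, Q w <-> forall i, \sum_(k : 'I_N * 'I_N) a i k * w k <= b i.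

(* Q contains d+1 affinely independent points, i.e. dim(aff Q) >= d *)
Definition affdim_ge N (Q : pt N -> Prop) (d : nat) : Prop :=
  exists p : 'I_d.+1 -> pt N,
    (forall i, Q (p i)) /\
    forall c : 'I_d -> R,
      (forall k, \sum_(i < d) c i * (p (lift ord0 i) k - p ord0 k) = 0) ->
      forall i, c i = 0.

(* dim S >= d for a finite union S of convex polyhedra: S contains a convex
   polyhedron of dimension >= d (the dimension of a finite union of polyhedra
   is the maximal dimension of a polyhedron contained in it). *)
Definition dim_ge N (S : pt N -> Prop) (d : nat) : Prop :=
  exists Q : pt N -> Prop,
    [/\ is_polyhedron Q, (forall w, Q w -> S w) & affdim_ge Q d].

End Tropical.

Definition f_square (R : realType) : tpoly R :=
  [:: (0, (0%Z, 0%Z)); (0, (1%Z, 0%Z)); (0, (0%Z, 1%Z)); (0, (1%Z, 1%Z))].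

From HB Require Import structures.
From mathcomp Require Import all_boot all_order all_algebra.
From mathcomp Require Import reals ring lra zify.
Set Implicit Arguments. Unset Strict Implicit. Unset Printing Implicit Defensive.
Import Order.TTheory GRing.Theory Num.Theory.
Local Open Scope ring_scope.

(* An affine point k |-> c + k_1 x + k_2 y with (x, y) on an
   axis satisfies the linearization of every polynomial of rad(f), and W_N is
   closed under touching minima: w lies in W_N when at each coordinate some
   point of W_N lies above w and agrees with it there.  Points that are
   constant along the rows off column 0, concave in the row index, and
   minimal and constant on column 0 are such minima (via tangent lines of a
   concave sequence); they form a polyhedron of dimension N + 1 inside W_N,
   hence inside every prevariety containing W_N.

   The linearizations of the polynomials (1 + X^a)(1 + Y^b) X^r Y^c
   of rad(f) cut out a prevariety containing W_N whose points have the
   rectangle property: in every 2 x 2 minor two entries coincide.  A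
   combinatorial induction shows that such a matrix takes all its values on at
   most 2N positions.  Applied to a generic point of the affine hull of a
   polyhedron in the prevariety, which lies in the polyhedron by convexity,
   this bounds its dimension by 2N <= 4N. *)

Section MinTwice.
Variable R : realType.
Implicit Types vs : seq R.

Lemma argmin_exists vs : (0 < size vs)%N ->
  exists2 i, (i < size vs)%N & forall k, (k < size vs)%N -> nth 0 vs i <= nth 0 vs k.
Proof.
elim: vs => [//|v [|v' vs] IH] _; first by exists 0%N => // -[|k].
have [i lti imin] := IH isT.
case: (leP v (nth 0 (v' :: vs) i)) => [vle|ltv].
  by exists 0%N => // -[|k] //= ltk; apply: le_trans vle (imin k ltk).
by exists i.+1 => // -[|k] /= ltk; [apply: ltW | apply: imin].
Qed.

(* If lw <= lu pointwise, both agree at a minimiser i0 of lw and the minimum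
   of lu is attained twice, then so is the minimum of lw: the two places where
   lu is minimal are squeezed down to the minimum of lw. *)
Lemma min_twice_dominated (lw lu : seq R) i0 :
  size lw = size lu -> (forall k, (k < size lw)%N -> nth 0 lw k <= nth 0 lu k) ->
  (i0 < size lw)%N -> (forall k, (k < size lw)%N -> nth 0 lw i0 <= nth 0 lw k) ->
  nth 0 lu i0 = nth 0 lw i0 -> min_twice lu -> min_twice lw.
Proof.
move=> eq_size lw_le lti0 i0min eq_i0 [a [b [lta ltb neab eqab abmin]]].
rewrite -eq_size in lta ltb.
have at_min k : (k < size lw)%N -> nth 0 lu k = nth 0 lu a -> nth 0 lw k = nth 0 lw i0.
  move=> ltk eqk; apply/le_anti; rewrite i0min // andbT.
  by apply: le_trans (lw_le _ ltk) _; rewrite eqk -eq_i0 abmin // -eq_size.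
exists a, b; split => //; first by rewrite !at_min.
by move=> k ltk; rewrite at_min //; apply: i0min.
Qed.

Lemma min_twice_shift (c : R) vs : min_twice vs -> min_twice (map (fun v => v + c) vs).
Proof.
move=> [a [b [lta ltb neab eqab abmin]]]; exists a, b; rewrite size_map; split => //.
  by rewrite !(nth_map 0) // eqab.
by move=> k ltk; rewrite !(nth_map 0) // lerD2r; apply: abmin.
Qed.

Lemma min_twice_not_uniq vs : min_twice vs -> ~~ uniq vs.
Proof.
move=> [i [j [lti ltj neij eqij _]]]; apply/negP => /nth_uniq uniq_vs.
by apply: neij; apply/eqP; rewrite -(uniq_vs 0 i j lti ltj) eqij.
Qed.

End MinTwice.

Section Touching.
Variables (R : realType) (N : nat).

(* A point w solves the linear polynomial g as soon as, at every coordinate p,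
   some solution of g lies above w and touches it at p: apply this to the
   coordinate of a term of g that is minimal at w. *)
Lemma lsol_touching (g : lpoly R N) (w : pt R N) : (0 < size g)%N ->
  (forall p, exists u : pt R N, [/\ lsol g u, (forall q, w q <= u q) & u p = w p]) ->
  lsol g w.
Proof.
move=> g_nonempty touch.
have [t0 _] : {t0 : R * ('I_N * 'I_N) | true} by case: (g) g_nonempty => // t0.
pose values (v : pt R N) := map (fun t => t.1 + v t.2) g.
have := @argmin_exists R (values w); rewrite size_map => /(_ g_nonempty)[i0 lti0 i0min].
have [u [sol_u le_wu eq_wu]] := touch (nth t0 g i0).2.
apply: (@min_twice_dominated R _ (values u) i0); rewrite ?size_map //.
- by move=> k ltk; rewrite !(nth_map t0) // lerD2l.
- by rewrite !(nth_map t0) // eq_wu.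
Qed.

Lemma WN_touching (f : tpoly R) (w : pt R N) :
  (forall p, exists u, [/\ WN f u, (forall q, w q <= u q) & u p = w p]) -> WN f w.
Proof.
move=> touch g g_rad; have [/andP[g_nonempty _] _] := g_rad.
apply: lsol_touching; first by rewrite size_map in g_nonempty.
by move=> p; have [u [WN_u le_wu eq_wu]] := touch p; exists u; split => //; apply: WN_u.
Qed.

End Touching.

Section VarietyOfSquare.
Variable R : realType.

Lemma f_square_terms (x : R * R) :
  map (fun t => tterm t x) (f_square R) = [:: 0; x.1; x.2; x.1 + x.2].
Proof. by rewrite /f_square /tterm /= !mul0r !mul1r !add0r !addr0. Qed.

Lemma tvar_f_square (x : R * R) : tvar (f_square R) x <-> x.1 = 0 \/ x.2 = 0.
Proof.
rewrite /tvar /tsol f_square_terms; case: x => a b /=; split.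
  move=> [i [j [lti ltj neij eqij ijmin]]].
  have := ijmin 0%N isT; have := ijmin 1%N isT.
  have := ijmin 2%N isT; have := ijmin 3%N isT.
  move: lti ltj neij eqij {ijmin}.
  case: i => [|[|[|[|i]]]] //; case: j => [|[|[|[|j]]]] //= *;
    (have [->|a_neq0] := eqVneq a 0; [by left | right]); lra.
case=> ->; [case: (leP 0 b) => b_sign | case: (leP 0 a) => a_sign].
- by exists 0%N, 1%N; split => //=; try lra; move=> [|[|[|[|k]]]] //= _; lra.
- by exists 2%N, 3%N; split => //=; try lra; move=> [|[|[|[|k]]]] //= _; lra.
- by exists 0%N, 2%N; split => //=; try lra; move=> [|[|[|[|k]]]] //= _; lra.
- by exists 1%N, 3%N; split => //=; try lra; move=> [|[|[|[|k]]]] //= _; lra.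
Qed.

(* The point of R^{T_N} whose coordinate k is the affine function
   c + k_1 x + k_2 y; its linearized value at g is g(x, y) + c. *)
Definition affine_pt (N : nat) (c x y : R) : pt R N :=
  fun k => c + (k.1 : nat)%:R * x + (k.2 : nat)%:R * y.

Lemma WN_affine_pt (N : nat) (c x y : R) : x = 0 \/ y = 0 ->
  WN (f_square R) (affine_pt c x y : pt R N).
Proof.
move=> /(tvar_f_square (x, y)) xy_in_V g [_ g_vanishes].
have := min_twice_shift c (g_vanishes _ xy_in_V); rewrite /lsol.
congr min_twice; rewrite /embedT -!map_comp; apply: eq_map => t /=.
by rewrite /tterm /affine_pt /= -!pmulrn; ring.
Qed.

End VarietyOfSquare.

Section Polyhedra.
Variables (R : realType) (N : nat).
Implicit Types (w : pt R N) (Q : pt R N -> Prop).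

Definition lin (a w : pt R N) : R := \sum_k a k * w k.
Definition delta (p : 'I_N * 'I_N) : pt R N := fun k => (k == p)%:R.

Lemma lin_delta p w : lin (delta p) w = w p.
Proof.
rewrite /lin (bigD1 p) //= big1 /delta ?eqxx ?mul1r ?addr0 // => k /negbTE ->.
by rewrite mul0r.
Qed.

Lemma lin_delta3 (c1 c2 c3 : R) p q r w :
  lin (fun k => c1 * delta p k + c2 * delta q k + c3 * delta r k) w =
  c1 * w p + c2 * w q + c3 * w r.
Proof.
have lin_scaled c s : \sum_k c * delta s k * w k = c * w s.
  by rewrite -lin_delta mulr_sumr; apply: eq_bigr => k _; rewrite mulrA.
by rewrite /lin; under eq_bigr do rewrite !mulrDl; rewrite !big_split /= !lin_scaled.
Qed.

Lemma polyhedron_ext Q Q' : (forall w, Q w <-> Q' w) -> is_polyhedron Q -> is_polyhedron Q'.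
Proof.
move=> eqQ [m [a [b Qdef]]]; exists m, a, b => w.
by rewrite -Qdef; apply: iff_sym.
Qed.

(* A finite family of homogeneous inequalities, selected by a predicate,
   defines a polyhedron (unselected ones are replaced by 0 <= 0). *)
Lemma polyhedron_family (T : finType) (P : pred T) (a : T -> pt R N) :
  is_polyhedron (fun w => forall t, P t -> lin (a t) w <= 0).
Proof.
pose a' t : pt R N := fun k => (P t)%:R * a t k.
have lin_a' t w : \sum_k a' t k * w k = (P t)%:R * lin (a t) w.
  by rewrite /lin mulr_sumr; apply: eq_bigr => k _; rewrite mulrA.
exists #|T|, (fun i => a' (enum_val i)), (fun=> 0) => w; split => [sol i | sol t Pt].
  by rewrite lin_a'; case: (boolP (P _)) => Pt; rewrite ?mul1r ?sol ?mul0r.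
by have := sol (enum_rank t); rewrite lin_a' enum_rankK Pt mul1r.
Qed.

Lemma polyhedronI Q1 Q2 :
  is_polyhedron Q1 -> is_polyhedron Q2 -> is_polyhedron (fun w => Q1 w /\ Q2 w).
Proof.
move=> [m1 [a1 [b1 Q1def]]] [m2 [a2 [b2 Q2def]]].
pose glue (X : Type) (f1 : 'I_m1 -> X) (f2 : 'I_m2 -> X) (i : 'I_(m1 + m2)) :=
  match split i with inl i1 => f1 i1 | inr i2 => f2 i2 end.
exists (m1 + m2), (glue _ a1 a2), (glue _ b1 b2) => w; rewrite Q1def Q2def.
split => [[sol1 sol2] i | sol]; first by rewrite /glue; case: (split i).
split=> [i1 | i2].
  by have := sol (lshift m2 i1); rewrite /glue (unsplitK (inl _)).
by have := sol (rshift m1 i2); rewrite /glue (unsplitK (inr _)).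
Qed.

Lemma polyhedron_convex Q D (p : 'I_D.+1 -> pt R N) (c : 'I_D -> R) :
  is_polyhedron Q -> (forall l, Q (p l)) -> (forall l, 0 <= c l) -> \sum_l c l <= 1 ->
  Q (fun k => p ord0 k + \sum_l c l * (p (lift ord0 l) k - p ord0 k)).
Proof.
move=> [m [A [B Qdef]]] Qp c_ge0 c_le1; apply/Qdef => i.
pose s l := \sum_k A i k * p l k.
have s_le l : s l <= B i by apply: (proj1 (Qdef (p l)) (Qp l) i).
have -> : \sum_k A i k * (p ord0 k + \sum_l c l * (p (lift ord0 l) k - p ord0 k)) =
          s ord0 + \sum_l c l * (s (lift ord0 l) - s ord0).
  under eq_bigr => k _ do rewrite mulrDr mulr_sumr.
  rewrite big_split /= exchange_big /=; congr (_ + _); apply: eq_bigr => l _.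
  by rewrite /s -sumrB mulr_sumr; apply: eq_bigr => k _; ring.
have : \sum_l c l * (s (lift ord0 l) - s ord0) <= (\sum_l c l) * (B i - s ord0).
  by rewrite mulr_suml; apply: ler_sum => l _; rewrite ler_wpM2l // lerD2r.
have := s_le ord0; have : 0 <= \sum_l c l by apply: sumr_ge0.
nra.
Qed.

End Polyhedra.

Section ConcaveSequences.
Variables (R : realDomainType) (a : nat -> R) (M : nat).
Hypothesis a_concave : forall i, (i.+2 < M)%N -> a i + a i.+2 <= 2 * a i.+1.

Lemma concave_slope_antitone j i : (j.+1 < M)%N -> (i <= j)%N ->
  a j.+1 - a j <= a i.+1 - a i.
Proof.
elim: j => [|j IHj] ltjM leij; first by move: leij; rewrite leqn0 => /eqP ->.
case: (ltnP i j.+1) => [ltij | leji]; last by have -> : i = j.+1 by lia.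
by have := IHj (ltnW ltjM) ltij; have := a_concave ltjM; lra.
Qed.

Lemma concave_le_tangent k m : (k.+1 < M)%N -> (m < M)%N ->
  a m <= a k + (m%:R - k%:R) * (a k.+1 - a k).
Proof.
move=> ltkM ltmM.
have above d : (k + d < M)%N -> a (k + d)%N <= a k + d%:R * (a k.+1 - a k).
  elim: d => [|d IHd] ltdM; first by rewrite addn0 mul0r addr0.
  have ltdM' : (k + d < M)%N by lia.
  have := IHd ltdM'; have := @concave_slope_antitone (k + d) k ltac:(lia) (leq_addr d k).
  by rewrite addnS -[d.+1]addn1 natrD; lra.
have below d : (d <= k)%N -> a (k - d)%N <= a k - d%:R * (a k.+1 - a k).
  elim: d => [|d IHd] ledk; first by rewrite subn0 mul0r subr0.
  have := IHd (ltnW ledk); have := @concave_slope_antitone k (k - d.+1)%N ltkM (leq_subr _ _).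
  have -> : (k - d = (k - d.+1).+1)%N by lia.
  by rewrite -[d.+1]addn1 natrD; lra.
case: (leqP k m) => [lekm | ltmk].
  by have := above (m - k)%N; rewrite subnKC // natrB //; apply.
have lemk := ltnW ltmk.
by have := below (k - m)%N (leq_subr _ _); rewrite subKn // natrB //; lra.
Qed.

End ConcaveSequences.

Section LowerBound.
Variables (R : realType) (n : nat).
Local Notation N := n.+1.
Implicit Types (w : pt R N) (i j : 'I_N).

Definition lower_polyhedron w : Prop :=
  [/\ forall i j j', (0 < j)%N -> (0 < j')%N -> w (i, j) <= w (i, j'),
      forall i i' j j', j = 0%N :> nat -> w (i, j) <= w (i', j') &
      forall i i' i'' j, i' = i.+1 :> nat -> i'' = i.+2 :> nat -> (0 < j)%N ->
        w (i, j) + w (i'', j) <= 2 * w (i', j)].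

(* The three conditions are families of inequalities between at most three
   coordinates, indexed by tuples of rows and columns. *)
Lemma lower_polyhedron_is_polyhedron : is_polyhedron lower_polyhedron.
Proof.
have family (T : finType) (P : pred T) (c1 c2 c3 : R) (p q r : T -> 'I_N * 'I_N) :
    is_polyhedron (fun w => forall t, P t -> c1 * w (p t) + c2 * w (q t) + c3 * w (r t) <= 0).
  apply: polyhedron_ext (polyhedron_family P
    (fun t k => c1 * delta R (p t) k + c2 * delta R (q t) k + c3 * delta R (r t) k)) => w.
  by split=> sol t Pt; have := sol t Pt; rewrite lin_delta3.
have rows := family _ (fun t : 'I_N * 'I_N * 'I_N => (0 < t.1.2)%N && (0 < t.2)%N)
  1 (-1) 0 (fun t => (t.1.1, t.1.2)) (fun t => (t.1.1, t.2)) (fun t => (t.1.1, t.2)).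
have column0 := family _ (fun t : 'I_N * 'I_N * 'I_N * 'I_N => t.1.2 == 0%N :> nat)
  1 (-1) 0 (fun t => (t.1.1.1, t.1.2)) (fun t => (t.1.1.2, t.2)) (fun t => (t.1.1.2, t.2)).
have concave := family _ (fun t : 'I_N * 'I_N * 'I_N * 'I_N =>
    [&& t.1.1.2 == t.1.1.1.+1 :> nat, t.1.2 == t.1.1.1.+2 :> nat & (0 < t.2)%N])
  1 (-2) 1 (fun t => (t.1.1.1, t.2)) (fun t => (t.1.1.2, t.2)) (fun t => (t.1.2, t.2)).
apply: polyhedron_ext (polyhedronI (polyhedronI rows column0) concave) => w; split.
- move=> [[sol1 sol2] sol3]; split.
  + by move=> i j j' gt0j gt0j'; have := sol1 (i, j, j'); rewrite /= gt0j gt0j'; lra.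
  + by move=> i i' j j' /eqP j0; have := sol2 (i, i', j, j'); rewrite /= j0; lra.
  + move=> i i' i'' j /eqP ei' /eqP ei'' gt0j.
    by have := sol3 (i, i', i'', j); rewrite /= ei' ei'' gt0j; lra.
- move=> [sol1 sol2 sol3]; split; first split.
  + by move=> [[i j] j'] /andP[gt0j gt0j']; have := sol1 i j j' gt0j gt0j'; lra.
  + by move=> [[[i i'] j] j'] /eqP j0; have := sol2 i i' j j' j0; lra.
  + move=> [[[i i'] i''] j] /and3P[/eqP ei' /eqP ei'' gt0j].
    by have := sol3 i i' i'' j ei' ei'' gt0j; lra.
Qed.

Section TouchingLowerPoints.
Variable w : pt R N.
Hypothesis w_lower : lower_polyhedron w.

(* At a point p of column 0, w is touched from above by the affine point with
   constant w p, slope 0 in the row index and a slope s in the column index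
   that exceeds every w k - w p. *)
Lemma lower_touch_column0 (p : 'I_N * 'I_N) : (p.2 : nat) = 0%N ->
  exists u, [/\ WN (f_square R) u, (forall q, w q <= u q) & u p = w p].
Proof.
case: w_lower => _ col0_min _ p_col0.
have w_ge k : w p <= w k.
  by case: k => i j; rewrite [p]surjective_pairing; apply: col0_min.
have le_col0 (q : 'I_N * 'I_N) : (q.2 : nat) = 0%N -> w q <= w p.
  by case: q => i j /= j0; have := col0_min i p.1 j p.2 j0; rewrite -surjective_pairing.
pose s := \sum_k (w k - w p).
exists (affine_pt (w p) 0 s); split; first by apply: WN_affine_pt; left.
- move=> [i j]; rewrite /affine_pt /= mulr0 addr0.
  have [j0 | gt0j] := posnP j.
    by rewrite j0 mul0r addr0; apply: le_col0.
  have s_ge0 : 0 <= s by apply: sumr_ge0 => k _; rewrite subr_ge0 w_ge.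
  have : w (i, j) - w p <= s.
    by rewrite /s (bigD1 (i, j)) //= lerDl; apply: sumr_ge0 => k _; rewrite subr_ge0 w_ge.
  have : s <= (j : nat)%:R * s by rewrite ler_peMl // ler1n.
  lra.
- by rewrite /affine_pt p_col0 !mul0r mulr0 !addr0.
Qed.

(* At a point p off column 0, w is touched from above by a tangent line of
   the concave row profile, extended as an affine point not depending on the
   column index. *)
Lemma lower_touch_row (p : 'I_N * 'I_N) : (0 < p.2)%N ->
  exists u, [/\ WN (f_square R) u, (forall q, w q <= u q) & u p = w p].
Proof.
case: w_lower => row_const col0_min concave gt0p.
pose a m := w (inord m, p.2).
have a_concave m : (m.+2 < N)%N -> a m + a m.+2 <= 2 * a m.+1.
  by move=> ltmN; apply: concave; rewrite // !inordK //; lia.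
have w_le_a q : w q <= a q.1.
  case: q => i j /=; rewrite /a inord_val.
  by have [j0 | gt0j] := posnP j; [apply: col0_min | apply: row_const].
have lt1N : (1 < N)%N by move: (ltn_ord p.2); lia.
pose k := minn p.1 n.-1; pose d := a k.+1 - a k.
have ltkN : (k.+1 < N)%N by rewrite /k; lia.
exists (affine_pt (a k - k%:R * d) d 0); split; first by apply: WN_affine_pt; right.
- move=> q; apply: le_trans (w_le_a q) _.
  have := concave_le_tangent a_concave ltkN (ltn_ord q.1).
  by rewrite /affine_pt mulr0 addr0 -/d; lra.
- have -> : w p = a p.1 by rewrite /a inord_val -surjective_pairing.
  rewrite /affine_pt mulr0 addr0.
  have [lepn | ltnp] := leqP p.1 n.-1.
    have ek : k = p.1 by rewrite /k; lia.
    by rewrite ek; ring.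
  have ek : k = n.-1 by rewrite /k; lia.
  have ep : (p.1 : nat) = k.+1 by move: (ltn_ord p.1); lia.
  by rewrite ep /d -addn1 natrD; ring.
Qed.

End TouchingLowerPoints.

Lemma lower_polyhedron_WN w : lower_polyhedron w -> WN (f_square R) w.
Proof.
move=> w_lower; apply: WN_touching => p.
have [p_col0 | gt0p] := posnP p.2.
  exact: lower_touch_column0.
exact: lower_touch_row.
Qed.

(* N + 2 affinely independent points of the lower polyhedron: a strictly
   concave base point, its perturbations raising one row off column 0, and
   the perturbation lowering column 0. *)
Definition lower_pt (l : nat) : pt R N := fun k =>
  if (k.2 == 0%N :> nat) then - (N%:R ^+ 2) - (l == N.+1)%:R
  else - ((k.1 : nat)%:R ^+ 2) + (l == (k.1 : nat).+1)%:R.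

(* Perturbing by 1 is absorbed by the concavity slack 2 of -i^2 and by the gap
   between column 0 and the other columns. *)
Lemma lower_pt_in l : lower_polyhedron (lower_pt l).
Proof.
rewrite /lower_pt; split.
- by move=> i j j' /lt0n_neq0/negbTE -> /lt0n_neq0/negbTE ->.
- move=> i i' j j' /eqP -> /=; case: ifP => _ //.
  have i'_le : ((i' : nat)%:R : R) <= N%:R by rewrite ler_nat ltnW.
  have : (0 : R) <= (i' : nat)%:R by [].
  have : (0 : R) <= (l == (i' : nat).+1)%:R by [].
  have : (0 : R) <= (l == N.+1)%:R by [].
  by nra.
- move=> i i' i'' j -> -> /lt0n_neq0/negbTE -> /=.
  have : ((l == i.+1)%:R + (l == i.+3)%:R : R) <= 1.
    case: (l =P i.+1) => [->|_]; last by rewrite add0r lern1 leq_b1.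
    by rewrite eqSS (@ltn_eqF i i.+2) //= addr0.
  have : (0 : R) <= (l == i.+2)%:R by [].
  by rewrite !mulrSr; nra.
Qed.

(* The differences to the base point are the indicator of row i off column 0
   (read at column 1, which exists for N >= 2) and minus that of column 0. *)
Lemma lower_affdim : (0 < n)%N -> affdim_ge lower_polyhedron N.+1.
Proof.
move=> gt0n; exists (fun l : 'I_N.+2 => lower_pt l); split.
  by move=> l; apply: lower_pt_in.
move=> c c_dep l.
have col1 : (1 < N)%N by [].
have [ltlN | leNl] := ltnP l N.
  have := c_dep (Ordinal ltlN, Ordinal col1).
  under eq_bigr => l' _ do rewrite /lower_pt /= /bump /= add1n eqSS addr0 addrAC subrr add0r.
  rewrite (bigD1 l) //= eqxx mulr1 big1 ?addr0 // => l' nel'l.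
  by rewrite (_ : (l' : nat) == l = false) ?mulr0 //; apply/negbTE.
have el : (l : nat) = N by move: (ltn_ord l); lia.
have := c_dep (ord0, ord0).
under eq_bigr => l' _ do rewrite /lower_pt /= /bump /= add1n eqSS subr0 addrAC subrr add0r.
rewrite (bigD1 l) //= el eqxx mulrN1 big1 ?addr0 => [/eqP|l' nel'l].
  by rewrite oppr_eq0 => /eqP.
rewrite (_ : (l' : nat) == N = false) ?oppr0 ?mulr0 //.
by apply/negbTE; apply: contra nel'l => /eqP el'; apply/eqP/val_inj; rewrite /= el' el.
Qed.

End LowerBound.

Section RectangleProperty.
Variables (T : eqType) (N : nat).
Implicit Types (z : 'I_N * 'I_N -> T) (r c : 'I_N).

Definition corners z r r' c c' : seq T := [:: z (r, c); z (r, c'); z (r', c); z (r', c')].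

Definition rect_property z : Prop :=
  forall r r' c c', r != r' -> c != c' -> ~~ uniq (corners z r r' c c').

Definition transpose z : 'I_N * 'I_N -> T := fun ij => z (ij.2, ij.1).

Lemma corners_swap_rows z r r' c c' :
  uniq (corners z r' r c c') = uniq (corners z r r' c c').
Proof. by rewrite -(rot_uniq 2). Qed.

Lemma perm_swap2 (a b : T) : perm_eq [:: a; b] [:: b; a].
Proof. by rewrite (perm_catC [:: a] [:: b]). Qed.

Lemma corners_swap_cols z r r' c c' :
  uniq (corners z r r' c' c) = uniq (corners z r r' c c').
Proof. exact: perm_uniq (perm_cat (perm_swap2 _ _) (perm_swap2 _ _)). Qed.

Lemma corners_transpose z r r' c c' :
  uniq (corners (transpose z) c c' r r') = uniq (corners z r r' c c').
Proof.
by apply: perm_uniq; rewrite perm_cons (perm_cat (perm_swap2 _ _) (perm_refl [:: _])).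
Qed.

Lemma rect_property_ordered z :
  (forall r r' c c', (r < r')%N -> (c < c')%N -> ~~ uniq (corners z r r' c c')) ->
  rect_property z.
Proof.
move=> ordered r r' c c' ner nec.
wlog ltr : r r' ner / (r < r')%N.
  move=> oriented; case: (ltngtP r r') => [|ltr'|/val_inj err]; first exact: oriented.
    by rewrite -corners_swap_rows; apply: oriented; rewrite // eq_sym.
  by rewrite err eqxx in ner.
case: (ltngtP c c') => [|ltc'|/val_inj ecc]; first exact: ordered.
  by rewrite -corners_swap_cols; apply: ordered.
by rewrite ecc eqxx in nec.
Qed.

Lemma rect_property_transpose z : rect_property z -> rect_property (transpose z).
Proof. by move=> rect r r' c c' ner nec; rewrite corners_transpose; apply: rect. Qed.

End RectangleProperty.

Section FewValues.
Variables (T : eqType) (N : nat).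
Implicit Types (z : 'I_N * 'I_N -> T) (I J : {set 'I_N}) (S : {set 'I_N * 'I_N}).

Definition covers z S I J : Prop :=
  forall i j, i \in I -> j \in J -> exists2 b, b \in S & z b = z (i, j).

Definition few_values z I J : Prop :=
  exists S, (#|S| <= #|I| + #|J|)%N /\ covers z S I J.

Lemma few_values_transpose z I J : few_values (transpose z) J I -> few_values z I J.
Proof.
move=> [S [card_S cover]]; exists [set (b.2, b.1) | b in S]; split.
  rewrite card_imset; first by rewrite addnC.
  by move=> [a b] [c d] /= [-> ->].
move=> i j iI jJ; have [b bS zb] := cover j i jJ iI.
by exists (b.2, b.1); [apply: imset_f | case: b {bS} zb].
Qed.

Definition private z I J r (x : T) : bool :=
  [forall i in I, forall j in J, (i != r) ==> (z (i, j) != x)].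

Definition few_private z I J r : bool :=
  [forall j1 in J, forall j2 in J,
     private z I J r (z (r, j1)) ==> private z I J r (z (r, j2)) ==> (z (r, j1) == z (r, j2))].

Lemma privateP z I J r x :
  reflect (forall i j, i \in I -> j \in J -> i != r -> z (i, j) != x) (private z I J r x).
Proof.
apply: (iffP forall_inP) => [priv i j iI jJ | priv i iI].
  by move: (priv i iI) => /forall_inP/(_ j jJ)/implyP; apply.
by apply/forall_inP => j jJ; apply/implyP; apply: priv.
Qed.

Lemma covers_not_private z S I J r j : covers z S (I :\ r) J ->
  ~~ private z I J r (z (r, j)) -> exists2 b, b \in S & z b = z (r, j).
Proof.
move=> cover /forall_inPn[i iI /forall_inPn[j' j'J]].
rewrite negb_imply negbK => /andP[ner /eqP eqz].
have iIr : i \in I :\ r by rewrite !inE ner.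
have [b bS zb] := cover i j' iIr j'J.
by exists b; rewrite // zb.
Qed.

Lemma few_values_add_row z I J r : r \in I -> few_private z I J r ->
  few_values z (I :\ r) J -> few_values z I J.
Proof.
move=> rI few [S [card_S cover]].
have card_I : #|I| = (#|I :\ r|).+1 by rewrite (cardsD1 r I) rI.
have cover_rest i j : i \in I -> j \in J -> i != r -> exists2 b, b \in S & z b = z (i, j).
  by move=> iI jJ ner; apply: cover; rewrite // !inE ner.
(* If z (r, j0) is private, add the position (r, j0): it covers the only
   private value of row r, the others occur in the remaining rows. *)
case: (pickP [pred j0 | (j0 \in J) && private z I J r (z (r, j0))])
  => [j0 /andP[j0J priv0] | no_priv].
- exists ((r, j0) |: S); split.
    by rewrite cardsU1 card_I addSn -add1n; apply: leq_add; first exact: leq_b1.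
  move=> i j iI jJ; have [eir | ner] := eqVneq i r; last first.
    by have [b bS zb] := cover_rest i j iI jJ ner; exists b; rewrite // !inE bS orbT.
  rewrite eir; have [priv | not_priv] := boolP (private z I J r (z (r, j))).
    exists (r, j0); rewrite ?setU11 //; apply/eqP.
    by move/forall_inP: few => /(_ j0 j0J)/forall_inP/(_ j jJ); rewrite priv0 priv.
  by have [b bS zb] := covers_not_private cover not_priv; exists b; rewrite // !inE bS orbT.
- exists S; split; first by rewrite card_I addSn; apply: ltnW.
  move=> i j iI jJ; have [eir | ner] := eqVneq i r; last exact: cover_rest.
  rewrite eir; apply: covers_not_private cover _.
  by have := no_priv j; rewrite /= jJ /= => ->.
Qed.

(* Under the rectangle property some row or some column of I x J has at most
   one private value: two private values of a row r, and a private value in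
   another row of one of their columns, would give four distinct corners. *)
Lemma rect_property_few_private z I J r : rect_property z -> r \in I ->
  few_private z I J r \/ exists2 c, c \in J & few_private (transpose z) J I c.
Proof.
move=> rect rI; have [few | many] := boolP (few_private z I J r); first by left.
right; case/forall_inPn: many => j1 j1J /forall_inPn[j2 j2J].
rewrite !negb_imply => /and3P[priv1 priv2 ne12].
have [few_col | /forall_inPn[i1 i1I /forall_inPn[i2 i2I]]] :=
  boolP (few_private (transpose z) J I j1); first by exists j1.
rewrite !negb_imply /transpose /= => /and3P[cpriv1 cpriv2 ne_i12].
have [i [iI nei cpriv]] :
    exists i, [/\ i \in I, i != r & private (transpose z) J I j1 (z (i, j1))].
  have [ei1 | ne1] := eqVneq i1 r; last by exists i1.
  by exists i2; split => //; apply: contraNneq ne_i12 => ->; rewrite ei1.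
have ne_j12 : j1 != j2 by apply: contraNneq ne12 => ->.
have other_row k x : k \in J -> private z I J r x -> (x == z (i, k)) = false.
  by move=> kJ /privateP priv; rewrite eq_sym; apply/negbTE/priv.
case/negP: (rect r i j1 j2 ltac:(by rewrite eq_sym) ne_j12).
rewrite /corners /= !inE (other_row j1 _ j1J priv1) (other_row j2 _ j2J priv1).
rewrite (other_row j1 _ j1J priv2) (other_row j2 _ j2J priv2) (negbTE ne12) /=.
move/privateP: cpriv => /(_ j2 i j2J iI); rewrite eq_sym => /(_ ne_j12).
by rewrite andbT eq_sym.
Qed.

(* The rectangle property forces at most |I| + |J| values on I x J, by
   induction on |I| + |J|, removing a row or a column with few private values. *)
Lemma rect_property_few_values z I J : rect_property z -> few_values z I J.
Proof.
move: {2}(#|I| + #|J|)%N (leqnn (#|I| + #|J|)) => n.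
elim: n z I J => [|n IHn] z I J size_IJ rect.
  exists set0; split => [|i j iI]; first by rewrite cards0.
  by move: size_IJ; rewrite leqn0 addn_eq0 => /andP[/eqP/cards0_eq I0 _]; rewrite I0 inE in iI.
have [I0 | [r rI]] := set_0Vmem I.
  by exists set0; split => [|i j]; rewrite ?cards0 ?I0 ?inE.
have [few_r | [c cJ few_c]] := rect_property_few_private J rect rI.
  apply: (few_values_add_row rI few_r); apply: IHn rect.
  by move: size_IJ; rewrite (cardsD1 r I) rI.
apply: few_values_transpose; apply: (few_values_add_row cJ few_c).
apply: IHn (rect_property_transpose rect).
by move: size_IJ; rewrite (cardsD1 c J) cJ addnC.
Qed.

End FewValues.

Section GenericPoint.
Variables (R : realFieldType) (T : finType) (D : nat) (p : 'I_D.+1 -> T -> R).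

(* The point p_0 + sum_l e^(l+1) (p_(l+1) - p_0); for a generic small e > 0
   its coordinates agree only where all the p_l agree. *)
Definition generic_comb (e : R) (a : T) : R :=
  p ord0 a + \sum_(l < D) e ^+ l.+1 * (p (lift ord0 l) a - p ord0 a).

Definition coord_poly (a : T) : {poly R} :=
  \poly_(i < D.+1) (if i is 0 then p ord0 a else p (inord i) a - p ord0 a).

Lemma coord_polyE e a : (coord_poly a).[e] = generic_comb e a.
Proof.
rewrite horner_poly big_ord_recl /= expr0 mulr1; congr (_ + _).
apply: eq_bigr => l _; rewrite mulrC; congr (_ * (p _ a - _)).
by apply: val_inj; rewrite /= /bump add1n inordK // ltnS.
Qed.

Lemma coord_poly_inj a b : coord_poly a = coord_poly b -> forall l, p l a = p l b.
Proof.
move=> eq_ab l; have := congr1 (fun q : {poly R} => q`_l) eq_ab.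
rewrite !coef_poly ltn_ord.
case: l => [[|i] lti] /=; first by rewrite (_ : Ordinal lti = ord0) //; apply: val_inj.
have -> : inord i.+1 = Ordinal lti by apply: val_inj; rewrite /= inordK.
have := congr1 (fun q : {poly R} => q`_0) eq_ab; rewrite !coef_poly /= => ->.
by move/addIr.
Qed.

Lemma nonroot_below (F : {poly R}) (c : R) : F != 0 -> 0 < c ->
  exists e, [/\ 0 < e, e <= c & ~~ root F e].
Proof.
move=> F_neq0 c_gt0.
pose cands := [seq c / (k.+1)%:R | k <- iota 0 (size F)].
have uniq_cands : uniq cands.
  rewrite map_inj_uniq ?iota_uniq // => k1 k2 /(mulfI (lt0r_neq0 c_gt0)) /invr_inj.
  by move/eqP; rewrite eqr_nat eqSS => /eqP.
have : ~~ all (root F) cands.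
  by apply/negP => all_roots; have := max_poly_roots F_neq0 all_roots uniq_cands;
    rewrite size_map size_iota ltnn.
case/allPn => _ /mapP[k _ ->] not_root; exists (c / (k.+1)%:R); split => //.
  by rewrite divr_gt0 ?ltr0n.
by rewrite ler_pdivrMr ?ltr0n // ler_pMr // ler1n.
Qed.

(* A small e that is not a root of any non-zero difference of coordinate
   polynomials is generic. *)
Lemma generic_exists : exists e, [/\ 0 < e, e * (D.+1)%:R <= 1 &
  forall a b, generic_comb e a = generic_comb e b -> forall l, p l a = p l b].
Proof.
pose diff (ab : T * T) := coord_poly ab.1 - coord_poly ab.2.
pose F := \prod_(ab | diff ab != 0) diff ab.
have F_neq0 : F != 0 by apply/prodf_neq0.
have inv_gt0 : 0 < (D.+1%:R : R)^-1 by rewrite invr_gt0 ltr0n.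
have [e [e_gt0 e_le not_root]] := nonroot_below F_neq0 inv_gt0.
exists e; split => //; first by rewrite -ler_pdivlMr ?ltr0n // div1r.
move=> a b eq_ab; apply: coord_poly_inj; apply/eqP; rewrite -subr_eq0.
apply: contraNT not_root => diff_ab; rewrite /root /F horner_prod.
apply/prodf_eq0; exists (a, b) => //.
by rewrite /diff hornerD hornerN !coord_polyE eq_ab subrr.
Qed.

Lemma generic_weights (e : R) :
  0 < e -> e * (D.+1)%:R <= 1 -> \sum_(l < D) e ^+ l.+1 <= 1.
Proof.
move=> e_gt0 e_small.
have e_le1 : e <= 1.
  by apply: le_trans e_small; rewrite ler_pMr // ler1n.
apply: le_trans (_ : \sum_(l < D) e <= 1).
  apply: ler_sum => l _; rewrite exprSr.
  by apply: ler_piMl; [exact: ltW | apply: exprn_ile1 => //; exact: ltW].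
by rewrite sumr_const card_ord -mulr_natr (le_trans _ e_small) // ler_pM2l // ler_nat.
Qed.

End GenericPoint.

Lemma wide_left_kernel (F : fieldType) m n (A : 'M[F]_(m, n)) : (n < m)%N ->
  exists2 c : 'rV_m, c != 0 & c *m A = 0.
Proof.
move=> ltnm; have /rowV0Pn[c /sub_kermxP cA c_neq0] : kermx A != 0.
  rewrite kermx_eq0 /row_free; apply: contraTneq ltnm => <-.
  by rewrite -leqNgt rank_leq_col.
by exists c.
Qed.

Section UpperBound.
Variables (R : realType) (N : nat).
Implicit Types (w : pt R N) (p q : 'I_N * 'I_N).

(* The linearization of (1 + X^(r'-r)) (1 + Y^(c'-c)) X^r Y^c, where
   p = (r, c) and q = (r', c'): the minimum of w over the corners of the
   rectangle spanned by p and q. *)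
Definition rect_poly p q : lpoly R N :=
  [:: (0, p); (0, (p.1, q.2)); (0, (q.1, p.2)); (0, q)].

Definition rect_prevariety w : Prop :=
  forall p q, (p.1 < q.1)%N -> (p.2 < q.2)%N -> lsol (rect_poly p q) w.

Lemma rect_poly_uniq p q : (p.1 < q.1)%N -> (p.2 < q.2)%N ->
  uniq [:: p; (p.1, q.2); (q.1, p.2); q].
Proof.
case: p q => [r c] [r' c'] /= ltr ltc.
have ner : (r == r') = false by rewrite -val_eqE /= ltn_eqF.
have nec : (c == c') = false by rewrite -val_eqE /= ltn_eqF.
by rewrite /= !inE !xpair_eqE ner nec !andbF.
Qed.

Lemma rect_prevariety_is_prevariety : is_prevariety rect_prevariety.
Proof.
pose rects := [seq rect_poly pq.1 pq.2 | pq <- enum [pred pq : ('I_N * 'I_N) * ('I_N * 'I_N) |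
                 (pq.1.1 < pq.2.1)%N && (pq.1.2 < pq.2.2)%N]].
have rectsP g : reflect (exists2 pq : ('I_N * 'I_N) * ('I_N * 'I_N),
    (pq.1.1 < pq.2.1)%N && (pq.1.2 < pq.2.2)%N & g = rect_poly pq.1 pq.2) (g \in rects).
  by apply: (iffP mapP) => -[pq]; rewrite ?mem_enum; exists pq; rewrite ?mem_enum.
exists rects; split.
  by move=> g /rectsP[[p q] /andP[ltr ltc] ->]; apply: rect_poly_uniq.
move=> w; split => [sol g /rectsP[[p q] /andP[ltr ltc] ->] | sol p q ltr ltc].
  exact: sol.
by apply: sol; apply/rectsP; exists (p, q); rewrite //= ltr ltc.
Qed.

(* The rectangle polynomials lie in rad(f): on either axis their four terms
   form two pairs of equal values, so the minimum is attained twice. *)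
Lemma WN_rect_prevariety w : WN (f_square R) w -> rect_prevariety w.
Proof.
move=> WN_w p q ltr ltc; apply: WN_w; split.
  rewrite /tpoly_wf /embedT /=; have := rect_poly_uniq ltr ltc.
  by case: p q {ltr ltc} => [r c] [r' c'] /=; rewrite !inE !xpair_eqE !eqz_nat.
move=> x /tvar_f_square; rewrite /tsol /embedT /= /tterm /= !add0r.
case: x => a b /= [->|->]; rewrite ?mulr0 ?add0r ?addr0.
- set u := (_ * b); set v := (_ * b); case: (leP u v) => [le_uv | lt_vu].
  + by exists 0%N, 2%N; split => //= -[|[|[|[|k]]]] //= _; lra.
  + by exists 1%N, 3%N; split => //= -[|[|[|[|k]]]] //= _; lra.
- set u := (_ * a); set v := (_ * a); case: (leP u v) => [le_uv | lt_vu].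
  + by exists 0%N, 1%N; split => //= -[|[|[|[|k]]]] //= _; lra.
  + by exists 2%N, 3%N; split => //= -[|[|[|[|k]]]] //= _; lra.
Qed.

Lemma rect_prevariety_rect_property w : rect_prevariety w -> rect_property w.
Proof.
move=> sol; apply: rect_property_ordered => r r' c c' ltr ltc.
by have := min_twice_not_uniq (sol (r, c) (r', c') ltr ltc); rewrite /= !add0r.
Qed.

(* Every polyhedron in the rectangle prevariety has dimension at most 2N:
   at a generic point z of its affine hull, which lies in the polyhedron,
   all values of z, hence all affine dependencies of the spanning points,
   are determined by at most 2N coordinates. *)
Lemma rect_prevariety_dim D : (N + N < D)%N -> ~ dim_ge rect_prevariety D.
Proof.
move=> ltD [Q [Q_poly Q_sub [p [Qp indep]]]].
have [e [e_gt0 e_small generic]] := generic_exists p.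
have Qz : Q (generic_comb p e).
  apply: (polyhedron_convex (c := fun l => e ^+ l.+1) Q_poly Qp).
    by move=> l; rewrite exprn_ge0 // ltW.
  exact: generic_weights.
have [S [card_S cover]] :=
  rect_property_few_values setT setT (rect_prevariety_rect_property (Q_sub _ Qz)).
rewrite !cardsT card_ord in card_S.
pose A : 'M[R]_(D, #|S|) :=
  \matrix_(l, k) (p (lift ord0 l) (enum_val k) - p ord0 (enum_val k)).
have [c c_neq0 cA] := wide_left_kernel A (leq_ltn_trans card_S ltD).
case/eqP: c_neq0; apply/rowP => l; rewrite mxE; apply: indep l => -[i j].
have [b bS zb] := cover i j (in_setT i) (in_setT j).
have := congr1 (fun M : 'rV_#|S| => M 0 (enum_rank_in bS b)) cA.
rewrite !mxE => cA_b; rewrite -[RHS]cA_b; apply: eq_bigr => l _.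
by rewrite mxE enum_rankK_in // !(generic _ _ zb).
Qed.

End UpperBound.

Theorem mainTheorem4 (R : realType) (N : nat) : (2 <= N)%N ->
  (forall P : pt R N -> Prop,
      is_prevariety P -> (forall w, WN (f_square R) w -> P w) ->
      dim_ge P N.+1) /\
  (exists P : pt R N -> Prop,
      [/\ is_prevariety P, (forall w, WN (f_square R) w -> P w) &
          ~ dim_ge P (4 * N).+1]).
Proof.
case: N => [|n] // le2N; split.
- move=> P _ WN_sub_P; exists (@lower_polyhedron R n); split.
  + exact: lower_polyhedron_is_polyhedron.
  + by move=> w /lower_polyhedron_WN /WN_sub_P.
  + exact: lower_affdim.
- exists (@rect_prevariety R n.+1); split.
  + exact: rect_prevariety_is_prevariety.
  + exact: WN_rect_prevariety.
  + apply: rect_prevariety_dim; lia.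
Qed.
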